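(* Consider the downlink RIS-aided multi-cell network with directional transmissions described in the context, with unit training overhead $\beta \in \left[0, \frac{T}{M_\text{B}M_\text{R}M_\text{U}+M_\text{B}M_\text{U}}\right)$. Its coverage probability has the form $$\mathcal{P}(\beta) = K\, p_{\text{E}_\text{B}}(\sigma_\text{B}, \theta_\text{B})\, p_{\text{E}_\text{U}}(\sigma_\text{U}, \theta_\text{U}),$$ where $K>0$ does not depend on $\beta$, and $p_{\text{E}_j}$, $\sigma_j$, $\theta_j$ ($j\in\{\text{B},\text{U}\}$) are as defined in the context. Then $\mathcal{P}$ is a monotonically increasing function of the unit training overhead $\beta$.
   Context: Base stations (BSs) and user equipments (UEs) carry uniform linear arrays with $M_\text{B}\ge 1$ and $M_\text{U}\ge 1$ antennas; each reconfigurable intelligent surface (RIS) has $M_\text{R}$ reflecting elements. Beams follow a sectored model with beamwidth $\theta_j = 4/M_j$ (radians) and main-lobe gain $N_j = 2\pi/\theta_j$, $j\in\{\text{B},\text{U}\}$. A frame of length $T$ is split into a channel estimation phase of length $T_\text{E} = \beta(M_\text{B}M_\text{R}M_\text{U}+M_\text{B}M_\text{U})$ and a data phase of length $T_\text{D}=T-T_\text{E}$, where $\beta \in [0, T/(M_\text{B}M_\text{R}M_\text{U}+M_\text{B}M_\text{U}))$ is the unit training overhead (training symbols per antenna-to-antenna/element path). With average channel signal-to-noise ratio $\text{SNR}>0$, the MMSE channel estimation error variance is $\sigma_\text{E}^2 = \frac{1}{1+\beta\,\text{SNR}}$. The beam alignment error $\varepsilon_j$ of end $j$ is a zero-mean Gaussian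 truncated to $[-\pi,\pi]$ with variance parameter $\sigma_j^2 = k_j\pi^2\sigma_\text{E}^2$, where $k_j\in(0,1]$. The probability that the alignment error is at most half the beamwidth is $$p_{\text{E}_j}(\sigma_j,\theta_j) = \mathbb{P}[|\varepsilon_j|\le \theta_j/2] = \frac{\operatorname{erf}\!\left(\frac{\theta_j}{2\sqrt{2\sigma_j^2}}\right)}{\operatorname{erf}\!\left(\frac{\pi}{\sqrt{2\sigma_j^2}}\right)}.$$ The coverage probability is $\mathcal{P}=\mathbb{P}[\text{SINR}>\tau]$ for the typical user at a threshold $\tau$; the serving link has total beamforming gain $N_\text{B}N_\text{U}$ with probability $p_{\text{E}_\text{B}}p_{\text{E}_\text{U}}$ and $0$ otherwise, and all other factors of $\mathcal{P}$ (network geometry, blockage, interference, noise) are collected into the constant $K>0$ independent of $\beta$. *)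

From Stdlib Require Import Reals Lra.
From Coquelicot Require Import Coquelicot.
Open Scope R_scope.

Definition erf (x : R) : R :=
  2 / sqrt PI * RInt (fun t => exp (- (t ^ 2))) 0 x.

Definition beamwidth (M : nat) : R := 4 / INR M.

Definition sigmaE2 (SNR beta : R) : R := 1 / (1 + beta * SNR).

Definition align_var (k SNR beta : R) : R := k * PI ^ 2 * sigmaE2 SNR beta.

(* p_E(sigma, theta) = P[|eps| <= theta/2] for a zero-mean Gaussian with variance
   parameter sigma2 truncated to [-pi, pi]:
   erf(theta / (2 sqrt(2 sigma2))) / erf(pi / sqrt(2 sigma2)). *)
Definition pE (sigma2 theta : R) : R :=
  erf (theta / (2 * sqrt (2 * sigma2))) / erf (PI / sqrt (2 * sigma2)).

Definition coverage (K SNR kB kU : R) (MB MU : nat) (beta : R) : R :=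
  K * pE (align_var kB SNR beta) (beamwidth MB)
    * pE (align_var kU SNR beta) (beamwidth MU).

Definition beta_max (T : R) (MB MR MU : nat) : R :=
  T / INR (MB * MR * MU + MB * MU).

(* As beta grows the alignment variance sigma_j^2 shrinks, so u = 1/sqrt(2 sigma_j^2)
   grows, and p_E = E(theta u / 2) / E(pi u) with E(x) = int_0^x exp(-t^2) dt.
   For 0 < a < b the ratio E(a u) / E(b u) is increasing in u: its logarithmic
   derivative is (eps(a u) - eps(b u)) / u, where the elasticity
   eps(x) = x E'(x) / E(x) of E is decreasing, its derivative having the sign of
   (1 - 2x^2) E(x) - x exp(-x^2) < 0 (use E(x) < x and 1 - x^2 <= exp(-x^2)).
   Since theta_j = 4 / M_j < 2 pi, both factors of the coverage probability increase. *)

From Stdlib Require Import Reals Lra.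
From Coquelicot Require Import Coquelicot.
Open Scope R_scope.

Definition gauss (t : R) : R := exp (- (t ^ 2)).

Definition gauss_integral (x : R) : R := RInt gauss 0 x.

Definition gauss_integral_elasticity (x : R) : R := x * gauss x / gauss_integral x.

Lemma gauss_pos (t : R) : 0 < gauss t.
Proof. apply exp_pos. Qed.

Lemma is_derive_gauss (t : R) : is_derive gauss t (- 2 * t * gauss t).
Proof. unfold gauss. auto_derive; [easy | simpl; ring]. Qed.

Lemma continuous_gauss (t : R) : continuous gauss t.
Proof. apply (ex_derive_continuous gauss). eexists. apply is_derive_gauss. Qed.

Lemma is_derive_gauss_integral (x : R) : is_derive gauss_integral x (gauss x).
Proof.
  apply (is_derive_RInt gauss gauss_integral 0); [| apply continuous_gauss].
  apply filter_forall. intros y. apply (RInt_correct gauss).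
  apply ex_RInt_continuous. intros; apply continuous_gauss.
Qed.

Lemma gauss_integral_pos (x : R) : 0 < x -> 0 < gauss_integral x.
Proof.
  intros Hx. apply RInt_gt_0; [exact Hx | intros; apply gauss_pos |].
  intros; apply continuous_gauss.
Qed.

Lemma gauss_integral_lt_id (x : R) : 0 < x -> gauss_integral x < x.
Proof.
  intros Hx. unfold gauss_integral.
  replace x with (RInt (fun _ => 1) 0 x) at 2
    by (rewrite RInt_const; unfold scal; simpl; unfold mult; simpl; ring).
  apply RInt_lt; [exact Hx | intros; apply continuous_const
                 | intros; apply continuous_gauss |].
  intros t Ht. unfold gauss. rewrite <- exp_0. apply exp_increasing. nra.
Qed.

Lemma gauss_integral_bound (x : R) :
  0 < x -> (1 - 2 * x ^ 2) * gauss_integral x < x * gauss x.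
Proof.
  intros Hx.
  pose proof (gauss_integral_pos x Hx). pose proof (gauss_integral_lt_id x Hx).
  pose proof (gauss_pos x).
  assert (1 - x ^ 2 <= gauss x) by (unfold gauss; pose proof (exp_ineq1_le (- (x ^ 2))); lra).
  destruct (Rle_or_lt (1 - 2 * x ^ 2) 0); nra.
Qed.

Lemma is_derive_gauss_integral_elasticity (x : R) : 0 < x ->
  is_derive gauss_integral_elasticity x
    (gauss x * ((1 - 2 * x ^ 2) * gauss_integral x - x * gauss x) / gauss_integral x ^ 2).
Proof.
  intros Hx. pose proof (gauss_integral_pos x Hx).
  assert (Hnum : is_derive (fun t => t * gauss t) x (gauss x * (1 - 2 * x ^ 2)))
    by (unfold gauss; auto_derive; [easy | simpl; ring]).
  unfold gauss_integral_elasticity.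
  replace (gauss x * ((1 - 2 * x ^ 2) * gauss_integral x - x * gauss x) / gauss_integral x ^ 2)
    with ((gauss x * (1 - 2 * x ^ 2) * gauss_integral x - x * gauss x * gauss x) / gauss_integral x ^ 2)
    by (field; lra).
  apply (is_derive_div (fun t => t * gauss t)); [exact Hnum | apply is_derive_gauss_integral | lra].
Qed.

Lemma gauss_integral_elasticity_decreasing (x y : R) :
  0 < x -> x < y -> gauss_integral_elasticity y < gauss_integral_elasticity x.
Proof.
  intros Hx Hxy. apply Ropp_lt_cancel.
  apply (incr_function (fun z => - gauss_integral_elasticity z) 0 p_infty
    (fun z => - (gauss z * ((1 - 2 * z ^ 2) * gauss_integral z - z * gauss z)
                 / gauss_integral z ^ 2))); try easy.
  - intros z Hz _. apply (is_derive_opp gauss_integral_elasticity).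
    apply is_derive_gauss_integral_elasticity, Hz.
  - intros z Hz _. simpl in Hz.
    pose proof (gauss_integral_bound z Hz).
    pose proof (gauss_pos z). pose proof (pow_lt _ 2 (gauss_integral_pos z Hz)).
    rewrite <- Rdiv_opp_l. apply Rdiv_lt_0_compat; nra.
Qed.

Lemma is_derive_gauss_integral_scaled (c w : R) :
  is_derive (fun v => gauss_integral (c * v)) w (c * gauss (c * w)).
Proof.
  apply (is_derive_comp gauss_integral (fun v => c * v)).
  - apply is_derive_gauss_integral.
  - auto_derive; [easy | ring].
Qed.

Lemma gauss_integral_ratio_increasing (a b u v : R) : 0 < a < b -> 0 < u -> u < v ->
  gauss_integral (a * u) / gauss_integral (b * u)
  < gauss_integral (a * v) / gauss_integral (b * v).
Proof.
  intros Hab Hu Huv.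
  apply (incr_function (fun w => gauss_integral (a * w) / gauss_integral (b * w)) 0 p_infty
    (fun w => (a * gauss (a * w) * gauss_integral (b * w)
               - gauss_integral (a * w) * (b * gauss (b * w))) / gauss_integral (b * w) ^ 2));
    try easy.
  - intros w Hw _. simpl in Hw.
    apply (is_derive_div (fun w => gauss_integral (a * w)) (fun w => gauss_integral (b * w)));
      [apply is_derive_gauss_integral_scaled .. |].
    apply Rgt_not_eq, gauss_integral_pos. nra.
  - intros w Hw _. simpl in Hw.
    assert (Ha : 0 < gauss_integral (a * w)) by (apply gauss_integral_pos; nra).
    assert (Hb : 0 < gauss_integral (b * w)) by (apply gauss_integral_pos; nra).
    pose proof (gauss_integral_elasticity_decreasing (a * w) (b * w) ltac:(nra) ltac:(nra)).
    apply Rdiv_lt_0_compat; [| apply pow_lt, Hb].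
    replace (a * gauss (a * w) * gauss_integral (b * w)
             - gauss_integral (a * w) * (b * gauss (b * w)))
      with (gauss_integral (a * w) * gauss_integral (b * w) / w
            * (gauss_integral_elasticity (a * w) - gauss_integral_elasticity (b * w)))
      by (unfold gauss_integral_elasticity; field; lra).
    apply Rmult_lt_0_compat; [apply Rdiv_lt_0_compat; nra | lra].
Qed.

Lemma pE_gauss_integral_ratio (s2 th : R) : 0 < s2 ->
  pE s2 th = gauss_integral (th / 2 * / sqrt (2 * s2))
             / gauss_integral (PI * / sqrt (2 * s2)).
Proof.
  intros Hs.
  assert (Hq : 0 < sqrt (2 * s2)) by (apply sqrt_lt_R0; lra).
  assert (Hp : 0 < sqrt PI) by (apply sqrt_lt_R0, PI_RGT_0).
  assert (HE : 0 < gauss_integral (PI * / sqrt (2 * s2)))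
    by (apply gauss_integral_pos, Rmult_lt_0_compat; [apply PI_RGT_0 | apply Rinv_0_lt_compat, Hq]).
  unfold pE, erf. change (RInt (fun t => exp (- (t ^ 2))) 0 ?x) with (gauss_integral x).
  replace (th / (2 * sqrt (2 * s2))) with (th / 2 * / sqrt (2 * s2)) by (field; lra).
  change (PI / sqrt (2 * s2)) with (PI * / sqrt (2 * s2)).
  field. lra.
Qed.

Lemma pE_pos (s2 th : R) : 0 < s2 -> 0 < th -> 0 < pE s2 th.
Proof.
  intros Hs Ht. rewrite pE_gauss_integral_ratio by exact Hs.
  assert (Hu : 0 < / sqrt (2 * s2)) by (apply Rinv_0_lt_compat, sqrt_lt_R0; lra).
  pose proof PI_RGT_0.
  apply Rdiv_lt_0_compat; apply gauss_integral_pos; nra.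
Qed.

Lemma pE_decreasing (s2 s2' th : R) : 0 < th < 2 * PI -> 0 < s2' < s2 ->
  pE s2 th < pE s2' th.
Proof.
  intros Ht Hs.
  rewrite !pE_gauss_integral_ratio by lra.
  apply gauss_integral_ratio_increasing; [lra | |].
  - apply Rinv_0_lt_compat, sqrt_lt_R0; lra.
  - apply Rinv_lt_contravar.
    + apply Rmult_lt_0_compat; apply sqrt_lt_R0; lra.
    + apply sqrt_lt_1; lra.
Qed.

Lemma align_var_pos (k SNR beta : R) : 0 < k -> 0 < SNR -> 0 <= beta ->
  0 < align_var k SNR beta.
Proof.
  intros Hk HS Hb. unfold align_var, sigmaE2. pose proof PI_RGT_0.
  apply Rmult_lt_0_compat; [apply Rmult_lt_0_compat; [lra | apply pow_lt; lra] |].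
  apply Rdiv_lt_0_compat; nra.
Qed.

Lemma align_var_decreasing (k SNR beta1 beta2 : R) : 0 < k -> 0 < SNR ->
  0 <= beta1 -> beta1 < beta2 -> align_var k SNR beta2 < align_var k SNR beta1.
Proof.
  intros Hk HS Hb1 Hb12. unfold align_var, sigmaE2. pose proof PI_RGT_0.
  apply Rmult_lt_compat_l; [apply Rmult_lt_0_compat; [lra | apply pow_lt; lra] |].
  unfold Rdiv. rewrite !Rmult_1_l.
  apply Rinv_lt_contravar; [apply Rmult_lt_0_compat |]; nra.
Qed.

Lemma beamwidth_bounds (M : nat) : (1 <= M)%nat -> 0 < beamwidth M < 2 * PI.
Proof.
  intros HM. apply le_INR in HM. simpl in HM. pose proof PI2_3_2.
  unfold beamwidth. split; [apply Rdiv_lt_0_compat; lra |].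
  apply Rle_lt_trans with 4; [| lra].
  apply Rmult_le_reg_r with (INR M); [lra |].
  field_simplify; lra.
Qed.

Theorem corollary1 (MB MR MU : nat) (T K SNR kB kU : R) :
  (1 <= MB)%nat -> (1 <= MR)%nat -> (1 <= MU)%nat ->
  0 < T -> 0 < K -> 0 < SNR ->
  0 < kB <= 1 -> 0 < kU <= 1 ->
  forall beta1 beta2 : R,
    0 <= beta1 < beta_max T MB MR MU ->
    0 <= beta2 < beta_max T MB MR MU ->
    beta1 < beta2 ->
    coverage K SNR kB kU MB MU beta1 < coverage K SNR kB kU MB MU beta2.
Proof.
  intros HB _ HU _ HK HS HkB HkU beta1 beta2 [Hb1 _] _ Hb12.
  assert (Hfactor : forall k M, 0 < k -> (1 <= M)%nat ->
    0 < pE (align_var k SNR beta1) (beamwidth M)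
      < pE (align_var k SNR beta2) (beamwidth M)).
  { intros k M Hk HM. pose proof (beamwidth_bounds M HM).
    split; [apply pE_pos; [apply align_var_pos |]; lra |].
    apply pE_decreasing; [lra | split].
    - apply align_var_pos; lra.
    - apply align_var_decreasing; lra. }
  destruct (Hfactor kB MB (proj1 HkB) HB). destruct (Hfactor kU MU (proj1 HkU) HU).
  unfold coverage. rewrite !Rmult_assoc.
  apply Rmult_lt_compat_l; [exact HK |].
  apply Rmult_le_0_lt_compat; lra.
Qed.
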